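(* Let $r,c\ge1$, $n=r+c$, $X_1,X_2$ as below, and $1\le K\le 2^{\min(r,c)}$. For every quantum algorithm $\mathcal A$ making $T$ queries to $\varphi$ and $\varphi^{-1}$, if for every permutation $\varphi$ of $\{0,1\}^n$ with exactly $K$ $X$-pairs $\mathcal A$ outputs an $X$-pair $(x,y)\in X_1\times X_2$ with $\varphi(x)=y$ with probability at least $\epsilon>0$, then $$\epsilon\le\frac{8(T+1)^2K}{2^{\min(r,c)}}.$$
   Context: $X_1\subset\{0,1\}^n$ is the set of strings ending in $0^c$, $X_2\subset\{0,1\}^n$ the set of strings beginning with $0^r$; an $X$-pair of $\varphi$ is $(x,y)\in X_1\times X_2$ with $\varphi(x)=y$. Queries are to the unitaries $O_\varphi:|a\rangle|b\rangle\mapsto|a\rangle|b\oplus\varphi(a)\rangle$ and $O_{\varphi^{-1}}:|a\rangle|b\rangle\mapsto|a\rangle|b\oplus\varphi^{-1}(a)\rangle$; success probability is over the algorithm's randomness and measurements. *)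

From HB Require Import structures.
From mathcomp Require Import all_boot all_order all_algebra all_fingroup.
From mathcomp Require Import complex.
From mathcomp Require Import reals.
Set Implicit Arguments. Unset Strict Implicit. Unset Printing Implicit Defensive.
Import Order.TTheory GRing.Theory Num.Theory.
Local Open Scope ring_scope.

(* n-bit strings; bit 0 is the first (leftmost) bit. *)
Definition bits (n : nat) := {ffun 'I_n -> bool}.

Definition bxor n (a b : bits n) : bits n := [ffun i => a i (+) b i].

(* X_1: strings of length r+c ending in 0^c ; X_2: strings beginning with 0^r *)
Definition inX1 (r c : nat) (x : bits (r + c)) : bool :=
  [forall i : 'I_(r + c), (r <= i)%N ==> ~~ x i].
Definition inX2 (r c : nat) (y : bits (r + c)) : bool :=
  [forall i : 'I_(r + c), (i < r)%N ==> ~~ y i].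

Definition Xpair r c (phi : {perm bits (r + c)}) (p : bits (r + c) * bits (r + c)) : bool :=
  [&& @inX1 r c p.1, @inX2 r c p.2 & phi p.1 == p.2].

Definition num_Xpairs r c (phi : {perm bits (r + c)}) : nat :=
  #|[set x : bits (r + c) | @inX1 r c x && @inX2 r c (phi x)]|.

(* Quantum state space: query input register, query output register, workspace W.
   States are amplitude vectors S -> R[i]; operators are kernels S -> S -> R[i]. *)
Definition qspace n (W : finType) := (bits n * bits n * W)%type.

Definition apply_op (R : rcfType) (S : finType) (U : S -> S -> R[i]) (v : S -> R[i]) : S -> R[i] :=
  fun s => \sum_(t : S) U s t * v t.

Definition op_unitary (R : rcfType) (S : finType) (U : S -> S -> R[i]) : Prop :=
  forall s t : S, \sum_(k : S) (U k s)^* * U k t = (s == t)%:R.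

(* Oracle O_f : |a>|b>|w> |-> |a>|b xor f(a)>|w>  (an involution, so this is its action
   on amplitude vectors). *)
Definition oracle (R : rcfType) n (W : finType) (f : bits n -> bits n)
  (v : qspace n W -> R[i]) : qspace n W -> R[i] :=
  fun s => v (s.1.1, bxor s.1.2 (f s.1.1), s.2).

Definition basis_vec (R : rcfType) (S : finType) (s0 : S) : S -> R[i] :=
  fun s => (s == s0)%:R.

(* State after the initial unitary U 0 and k queries: the j-th query (j = 0..k-1) is to
   phi if dir j, to phi^-1 otherwise, and is followed by the unitary U (j+1). *)
Fixpoint qstate (R : rcfType) n (W : finType) (phi : {perm bits n})
  (s0 : qspace n W) (U : nat -> qspace n W -> qspace n W -> R[i]) (dir : nat -> bool)
  (k : nat) : qspace n W -> R[i] :=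
  match k with
  | 0 => apply_op (U 0%N) (basis_vec R s0)
  | k'.+1 => apply_op (U k)
      (oracle (if dir k' then (phi : bits n -> bits n) else (phi^-1)%g) (qstate phi s0 U dir k'))
  end.

(* Success probability: measure all registers in the computational basis after T queries
   and output out(s); success iff the output is an X-pair of phi. *)
Definition success_prob (R : rcfType) r c (W : finType) (phi : {perm bits (r + c)})
  (s0 : qspace (r + c) W) (U : nat -> qspace (r + c) W -> qspace (r + c) W -> R[i])
  (dir : nat -> bool) (out : qspace (r + c) W -> bits (r + c) * bits (r + c)) (T : nat) : R[i] :=
  \sum_(s : qspace (r + c) W | Xpair phi (out s)) `|qstate phi s0 U dir T s| ^+ 2.

From HB Require Import structures.
From mathcomp Require Import all_boot all_order all_algebra all_fingroup.
From mathcomp Require Import complex.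
From mathcomp Require Import reals.
From mathcomp Require Import ring lra zify.
Import Order.TTheory GRing.Theory Num.Theory.
Local Open Scope ring_scope.

(* Let m = min r c and N = 2^m %/ K, and cut the 2^m words w of length m into N
   blocks of K words.  The permutation phi0 x = rot_r(x) + e_0 has no X-pairs, and
   composing it with the involution exchanging y_w and y_w + e_0 for the words w of a
   block z gives a permutation phi_z whose X-pairs are exactly the (x_w, y_w),
   w in block z, where x_w = 0^(r-m) w 0^c and y_w = 0^(n-m) w.  The phi_z differ from
   phi0 on pairwise disjoint sets of queries and have pairwise disjoint sets of
   X-pairs.  By the hybrid argument, sqrt eps is at most the weight of the X-pairs of
   phi_z in the final state of the run on phi0 plus twice the weights of the queries
   where phi_z and phi0 differ in its T intermediate states; summing over z and using
   Cauchy-Schwarz on disjoint projections, N sqrt eps <= (1 + 2T) sqrt N, i.e.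
   N eps <= (1 + 2T)^2, and N >= 2^m / (2K). *)

Set Implicit Arguments. Unset Strict Implicit. Unset Printing Implicit Defensive.

Section RealSums.
Variable R : realType.

Lemma cauchy_schwarz_sum (I : finType) (x y : I -> R) :
  (\sum_i x i * y i) ^+ 2 <= (\sum_i x i ^+ 2) * (\sum_i y i ^+ 2).
Proof.
have lagrange : \sum_i \sum_j (x i * y j - x j * y i) ^+ 2 =
    2 * ((\sum_i x i ^+ 2) * (\sum_i y i ^+ 2) - (\sum_i x i * y i) ^+ 2).
  have expand i j : (x i * y j - x j * y i) ^+ 2 =
      x i ^+ 2 * y j ^+ 2 + y i ^+ 2 * x j ^+ 2 - 2 * (x i * y i) * (x j * y j).
    by ring.
  under eq_bigr do under eq_bigr do rewrite expand.
  under eq_bigr do rewrite sumrB big_split /= -!mulr_sumr.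
  set A := \sum_i x i ^+ 2; set B := \sum_i y i ^+ 2; set C := \sum_i x i * y i.
  rewrite sumrB big_split /= -!mulr_suml -/A -/B -/C -mulr_sumr -/C; ring.
have : 0 <= \sum_i \sum_j (x i * y j - x j * y i) ^+ 2.
  by apply: sumr_ge0 => i _; apply: sumr_ge0 => j _; apply: sqr_ge0.
rewrite lagrange; lra.
Qed.

Lemma sum_sqr_ge0 (I : finType) (f : I -> R) : 0 <= \sum_i f i ^+ 2.
Proof. by apply: sumr_ge0 => i _; apply: sqr_ge0. Qed.

Lemma minkowski_sum (I : finType) (f g : I -> R) :
  Num.sqrt (\sum_i (f i + g i) ^+ 2) <=
  Num.sqrt (\sum_i f i ^+ 2) + Num.sqrt (\sum_i g i ^+ 2).
Proof.
have CS := cauchy_schwarz_sum f g.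
set A := \sum_i f i ^+ 2 in CS *; set B := \sum_i g i ^+ 2 in CS *.
set C := \sum_i f i * g i in CS.
have -> : \sum_i (f i + g i) ^+ 2 = A + B + 2 * C.
  rewrite /A /B /C mulr_sumr -!big_split /=; apply: eq_bigr => i _; ring.
have A0 : 0 <= A by apply: sum_sqr_ge0.
have B0 : 0 <= B by apply: sum_sqr_ge0.
have C_le : C <= Num.sqrt A * Num.sqrt B.
  rewrite -sqrtrM //; apply: le_trans (ler_norm C) _.
  by rewrite -sqrtr_sqr ler_wsqrtr.
have rhs0 : 0 <= Num.sqrt A + Num.sqrt B by rewrite addr_ge0 ?sqrtr_ge0.
rewrite -[X in _ <= X]ger0_norm // -sqrtr_sqr ler_wsqrtr //.
have := sqr_sqrtr A0; have := sqr_sqrtr B0; nra.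
Qed.

Lemma sum_sqrt_le (I : finType) (q : I -> R) : (forall i, 0 <= q i) ->
  \sum_i Num.sqrt (q i) <= Num.sqrt (#|I|%:R) * Num.sqrt (\sum_i q i).
Proof.
move=> q0; have CS := cauchy_schwarz_sum (fun _ => 1) (fun i => Num.sqrt (q i)).
have lhs0 : 0 <= \sum_i Num.sqrt (q i) by apply: sumr_ge0 => i _; apply: sqrtr_ge0.
rewrite -sqrtrM ?ler0n // -[X in X <= _]ger0_norm // -sqrtr_sqr ler_wsqrtr //.
move: CS; under eq_bigr do rewrite mul1r.
under [\sum_i 1 ^+ 2]eq_bigr do rewrite expr1n.
under [\sum_i Num.sqrt _ ^+ 2]eq_bigr do rewrite sqr_sqrtr //.
by rewrite sumr_const.
Qed.

Lemma mul_sqrt_le_sqr (N e b : R) : 0 <= N -> 0 <= e -> 0 <= b ->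
  N * Num.sqrt e <= b * Num.sqrt N -> N * e <= b ^+ 2.
Proof.
move=> N0 e0 b0 h.
have t0 := sqrtr_ge0 N; have s0 := sqrtr_ge0 e.
have [tz|tn0] := eqVneq (Num.sqrt N) 0.
  by rewrite -(sqr_sqrtr N0) tz expr0n mul0r sqr_ge0.
have tp : 0 < Num.sqrt N by rewrite lt_def tn0 t0.
have ts : Num.sqrt N * Num.sqrt e <= b.
  by rewrite -(ler_pM2l tp) mulrA -expr2 sqr_sqrtr // [_ * b]mulrC.
rewrite -(sqr_sqrtr N0) -(sqr_sqrtr e0) -exprMn.
have := mulr_ge0 t0 s0; nra.
Qed.

Lemma block_count_bound (M K T : nat) (e : R) :
  (0 < K)%N -> (K <= M)%N -> (M %/ K)%:R * e <= (1 + 2 * T%:R) ^+ 2 ->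
  e <= (8 * (T + 1) ^ 2 * K)%:R / M%:R.
Proof.
move=> K_gt0 K_le_M Ne_le.
have N_gt0 : (0 < M %/ K)%N by rewrite divn_gt0.
have M_le : (M <= 2 * (M %/ K * K))%N.
  rewrite {1}(divn_eq M K) mul2n -addnn leq_add2l.
  exact: leq_trans (ltnW (ltn_pmod M K_gt0)) (leq_pmull _ N_gt0).
have M_leR : (M%:R : R) <= 2 * (M %/ K)%:R * K%:R by rewrite -!natrM ler_nat -mulnA.
have M_gt0 : (0 : R) < M%:R by rewrite ltr0n; apply: leq_trans K_le_M.
rewrite ler_pdivlMr // !natrM natrD.
have N0 : (0 : R) < (M %/ K)%:R by rewrite ltr0n.
have K0 : (0 : R) < K%:R by rewrite ltr0n.
have T0 : (0 : R) <= T%:R by rewrite ler0n.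
nra.
Qed.

End RealSums.

Section Vectors.
Variables (R : realType) (S : finType).
Implicit Types u v w : S -> R[i].

Definition sqmod (z : R[i]) : R := complex.Re z ^+ 2 + complex.Im z ^+ 2.
Definition sqnorm v : R := \sum_s sqmod (v s).
Definition vnorm v : R := Num.sqrt (sqnorm v).
Definition restrict (P : pred S) v : S -> R[i] := fun s => if P s then v s else 0.

Lemma sqmod_ge0 z : 0 <= sqmod z.
Proof. by rewrite addr_ge0 ?sqr_ge0. Qed.

Lemma sqmodE z : (sqmod z)%:C%C = `|z| ^+ 2.
Proof. exact: add_Re2_Im2. Qed.

Lemma sqmod0 : sqmod 0 = 0.
Proof. by rewrite /sqmod /= expr0n /= addr0. Qed.

Lemma sqmodN z : sqmod (- z) = sqmod z.
Proof. by case: z => a b; rewrite /sqmod /= !sqrrN. Qed.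

Lemma sqnorm_ge0 v : 0 <= sqnorm v.
Proof. by apply: sumr_ge0 => s _; apply: sqmod_ge0. Qed.

Lemma sqnormE v : (sqnorm v)%:C%C = \sum_s (v s)^* * v s.
Proof. by rewrite rmorph_sum; apply: eq_bigr => s _; rewrite /= sqmodE normCKC. Qed.

Lemma eq_vnorm u v : u =1 v -> vnorm u = vnorm v.
Proof. by move=> uv; rewrite /vnorm /sqnorm; under eq_bigr do rewrite uv. Qed.

Lemma vnorm_restrict P v : vnorm (restrict P v) <= vnorm v.
Proof.
apply: ler_wsqrtr; apply: ler_sum => s _; rewrite /restrict.
by case: (P s); rewrite ?sqmod0 ?sqmod_ge0.
Qed.

Lemma vnormN v : vnorm (fun s => - v s) = vnorm v.
Proof. by rewrite /vnorm /sqnorm; under eq_bigr do rewrite sqmodN. Qed.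

Lemma vnorm0 : vnorm (fun _ => 0) = 0.
Proof. by rewrite /vnorm /sqnorm big1 ?sqrtr0 // => s _; rewrite sqmod0. Qed.

Lemma vnorm_reindex (h : S -> S) v : injective h -> vnorm (v \o h) = vnorm v.
Proof. by move=> h_inj; rewrite /vnorm /sqnorm [in RHS](reindex_inj h_inj). Qed.

Definition realify v (p : bool * S) : R :=
  if p.1 then complex.Re (v p.2) else complex.Im (v p.2).

Lemma vnorm_realify v : vnorm v = Num.sqrt (\sum_p realify v p ^+ 2).
Proof.
rewrite -(pair_big xpredT xpredT (fun b s => realify v (b, s) ^+ 2)) /= big_bool /=.
by rewrite -big_split.
Qed.

Lemma vnormD u v : vnorm (fun s => u s + v s) <= vnorm u + vnorm v.
Proof.
have realifyD : \sum_p realify (fun s => u s + v s) p ^+ 2 =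
    \sum_p (realify u p + realify v p) ^+ 2.
  by apply: eq_bigr => -[[] s] _; rewrite /realify /=; case: (u s); case: (v s).
rewrite !vnorm_realify realifyD; exact: minkowski_sum.
Qed.

Lemma vnormB u v : vnorm (fun s => u s - v s) <= vnorm u + vnorm v.
Proof. by rewrite -(vnormN v); apply: vnormD. Qed.

Lemma vnormB_trans u v w :
  vnorm (fun s => u s - w s) <= vnorm (fun s => u s - v s) + vnorm (fun s => v s - w s).
Proof.
rewrite (@eq_vnorm _ (fun s => (u s - v s) + (v s - w s))); first exact: vnormD.
by move=> s; rewrite addrA subrK.
Qed.

Lemma vnorm_apply_op (U : S -> S -> R[i]) v : op_unitary U -> vnorm (apply_op U v) = vnorm v.
Proof.
move=> hU; congr Num.sqrt; apply: complexI; rewrite !sqnormE /apply_op.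
transitivity (\sum_s \sum_t \sum_t' ((v t)^* * v t') * ((U s t)^* * U s t')).
  apply: eq_bigr => s _; rewrite rmorph_sum big_distrl; apply: eq_bigr => t _.
  rewrite big_distrr; apply: eq_bigr => t' _; rewrite rmorphM /=; ring.
rewrite exchange_big; apply: eq_bigr => t _; rewrite exchange_big /=.
under eq_bigr do rewrite -mulr_sumr hU.
rewrite (bigD1 t) //= eqxx mulr1 big1 ?addr0 // => t' /negbTE.
by rewrite eq_sym => ->; rewrite mulr0.
Qed.

Lemma vnorm_basis s0 : vnorm (basis_vec R s0) = 1.
Proof.
rewrite /vnorm /sqnorm (bigD1 s0) //= big1 ?addr0 /basis_vec ?eqxx; last first.
  by move=> s /negbTE ->; rewrite sqmod0.
by rewrite /sqmod /= expr1n expr0n addr0 sqrtr1.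
Qed.

Lemma sum_vnorm_restrict (Z : finType) (P : Z -> pred S) v :
  (forall z z' s, P z s -> P z' s -> z = z') ->
  \sum_z vnorm (restrict (P z) v) <= Num.sqrt (#|Z|%:R) * vnorm v.
Proof.
move=> P_disj; apply: le_trans (sum_sqrt_le (fun z => sqnorm_ge0 (restrict (P z) v))) _.
rewrite ler_wpM2l ?sqrtr_ge0 // ler_wsqrtr // /sqnorm exchange_big.
apply: ler_sum => s _ /=; case: (pickP (fun z => P z s)) => [z0 Pz0|noP]; last first.
  by rewrite big1 ?sqmod_ge0 // => z _; rewrite /restrict noP sqmod0.
rewrite (bigD1 z0) //= /restrict Pz0 big1 ?addr0 // => z z_neq.
case: ifP => Pz; last by rewrite sqmod0.
by move: z_neq; rewrite (P_disj _ _ _ Pz Pz0) eqxx.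
Qed.

End Vectors.

Section Hybrid.
Variables (R : realType) (n : nat) (W : finType).
Local Notation S := (qspace n W).

Definition query_map (phi : {perm bits n}) (b : bool) : bits n -> bits n :=
  if b then (phi : bits n -> bits n) else (phi^-1)%g.

Lemma bxorK (a b : bits n) : bxor (bxor a b) b = a.
Proof. by apply/ffunP => i; rewrite !ffunE addbK. Qed.

Definition oracle_perm (f : bits n -> bits n) (s : S) : S :=
  (s.1.1, bxor s.1.2 (f s.1.1), s.2).

Lemma oracle_permK f : involutive (oracle_perm f).
Proof. by case=> [[a b] w]; rewrite /oracle_perm /= bxorK. Qed.

Lemma vnorm_oracle f (v : S -> R[i]) : vnorm (oracle f v) = vnorm v.
Proof. exact: (vnorm_reindex v (inv_inj (oracle_permK f))). Qed.

(* Both oracles act identically outside [D], and each preserves norms. *)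
Lemma vnorm_oracleB f g (D : pred (bits n)) (v : S -> R[i]) :
  (forall a, f a != g a -> D a) ->
  vnorm (fun s => oracle f v s - oracle g v s) <= 2 * vnorm (restrict (fun s : S => D s.1.1) v).
Proof.
move=> fgD; set vD := restrict _ v.
rewrite (@eq_vnorm _ _ _ (fun s => oracle f vD s - oracle g vD s)).
  by apply: le_trans (vnormB _ _) _; rewrite !vnorm_oracle mulr2n mulrDl mul1r.
move=> s; rewrite /oracle /vD /restrict /=.
case: (boolP (D s.1.1)) => // notD.
have fg : f s.1.1 = g s.1.1 by apply/eqP; apply: contraNT notD; apply: fgD.
by rewrite fg !subrr.
Qed.

Variables (s0 : S) (U : nat -> S -> S -> R[i]) (dir : nat -> bool) (T : nat).
Hypothesis U_unitary : forall j, (j <= T)%N -> op_unitary (U j).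

Lemma vnorm_qstate (phi : {perm bits n}) k : (k <= T)%N -> vnorm (qstate phi s0 U dir k) = 1.
Proof.
elim: k => [|k IH] k_le /=.
  by rewrite vnorm_apply_op ?vnorm_basis //; apply: U_unitary.
by rewrite vnorm_apply_op ?vnorm_oracle ?IH ?(ltnW k_le) //; apply: U_unitary.
Qed.

Lemma qstate_dist_le (phi phi0 : {perm bits n}) (D : nat -> pred (bits n)) :
  (forall j a, query_map phi (dir j) a != query_map phi0 (dir j) a -> D j a) ->
  forall k, (k <= T)%N ->
  vnorm (fun s => qstate phi s0 U dir k s - qstate phi0 s0 U dir k s)
    <= 2 * \sum_(j < k) vnorm (restrict (fun s : S => D j s.1.1) (qstate phi0 s0 U dir j)).
Proof.
move=> phiD; elim=> [|k IH] k_le.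
  by rewrite (@eq_vnorm _ _ _ (fun _ => 0)) ?vnorm0 ?big_ord0 ?mulr0 // => s; rewrite subrr.
set x := qstate phi s0 U dir k; set y := qstate phi0 s0 U dir k.
set f := query_map phi (dir k); set g := query_map phi0 (dir k).
rewrite (@eq_vnorm _ _ _ (apply_op (U k.+1) (fun s => oracle f x s - oracle g y s))); last first.
  by move=> s; rewrite /= /apply_op -sumrB; apply: eq_bigr => t _; rewrite mulrBr.
rewrite vnorm_apply_op; last exact: U_unitary.
rewrite big_ord_recr /= mulrDr.
apply: le_trans (vnormB_trans _ (oracle f y) _) _; apply: lerD.
  by rewrite (@eq_vnorm _ _ _ (oracle f (fun s => x s - y s))) // vnorm_oracle IH // ltnW.
exact: vnorm_oracleB (phiD k).
Qed.

Lemma sqrt_success_le (phi phi0 : {perm bits n}) (G : pred S) (D : nat -> pred (bits n)) :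
  (forall j a, query_map phi (dir j) a != query_map phi0 (dir j) a -> D j a) ->
  Num.sqrt (sqnorm (restrict G (qstate phi s0 U dir T))) <=
    vnorm (restrict G (qstate phi0 s0 U dir T)) +
    2 * \sum_(j < T) vnorm (restrict (fun s : S => D j s.1.1) (qstate phi0 s0 U dir j)).
Proof.
move=> phiD; set psi := qstate phi s0 U dir T; set psi0 := qstate phi0 s0 U dir T.
rewrite -/(vnorm _) (@eq_vnorm _ _ _ (fun s => restrict G psi0 s +
    restrict G (fun s => psi s - psi0 s) s)); last first.
  by move=> s; rewrite /restrict; case: (G s); rewrite ?addr0 // addrC subrK.
apply: le_trans (vnormD _ _) _; rewrite lerD2l.
exact: le_trans (vnorm_restrict _ _) (qstate_dist_le phiD (leqnn T)).
Qed.

(* Compare every [phis z] with the single run on [phi0]: by Cauchy-Schwarz, the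
   disjoint projections of each of its states sum to at most [sqrt #|Z|]. *)
Lemma disjoint_search_bound (Z : finType) (phis : Z -> {perm bits n}) (phi0 : {perm bits n})
    (G : Z -> pred S) (D : Z -> nat -> pred (bits n)) (e : R) :
  (forall z j a, query_map (phis z) (dir j) a != query_map phi0 (dir j) a -> D z j a) ->
  (forall j z z' a, D z j a -> D z' j a -> z = z') ->
  (forall z z' s, G z s -> G z' s -> z = z') ->
  0 <= e ->
  (forall z, e <= sqnorm (restrict (G z) (qstate (phis z) s0 U dir T))) ->
  #|Z|%:R * e <= (1 + 2 * T%:R) ^+ 2.
Proof.
move=> phisD D_disj G_disj e_ge0 success.
pose psi0 j := qstate phi0 s0 U dir j.
have per_z z : Num.sqrt e <= vnorm (restrict (G z) (psi0 T)) +
    2 * \sum_(j < T) vnorm (restrict (fun s : S => D z j s.1.1) (psi0 j)).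
  exact: le_trans (ler_wsqrtr (success z)) (sqrt_success_le (G z) (phisD z)).
have G_sum : \sum_z vnorm (restrict (G z) (psi0 T)) <= Num.sqrt #|Z|%:R.
  by have := sum_vnorm_restrict (psi0 T) G_disj; rewrite vnorm_qstate // mulr1.
have D_sum : \sum_(j < T) \sum_z vnorm (restrict (fun s : S => D z j s.1.1) (psi0 j))
    <= T%:R * Num.sqrt #|Z|%:R.
  rewrite -[T in T%:R]card_ord mulr_natl -sumr_const; apply: ler_sum => j _.
  have Dj_disj z z' (s : S) : D z j s.1.1 -> D z' j s.1.1 -> z = z' by apply: D_disj.
  by have := sum_vnorm_restrict (psi0 j) Dj_disj; rewrite vnorm_qstate ?mulr1 // ltnW.
apply: mul_sqrt_le_sqr; rewrite ?ler0n ?addr_ge0 ?mulr_ge0 ?ler0n //.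
have -> : #|Z|%:R * Num.sqrt e = \sum_(z : Z) Num.sqrt e by rewrite sumr_const mulr_natl.
apply: le_trans (ler_sum _ (fun z _ => per_z z)) _.
rewrite big_split /= -mulr_sumr exchange_big /=; nra.
Qed.

End Hybrid.

Section Construction.
Variables (r c : nat).
Hypothesis r_gt0 : (0 < r)%N.
Local Notation n := (r + c)%N.
Local Notation m := (minn r c).

Lemma n_gt0 : (0 < n)%N. Proof. by rewrite addn_gt0 r_gt0. Qed.

Definition bit0 : 'I_n := Ordinal n_gt0.
Definition e0 : bits n := [ffun i : 'I_n => i == bit0].

(* [xword w] is the string 0^(r-m) w 0^c of X1, [yword w] the string 0^(n-m) w of X2. *)
Definition xword (w : bits m) : bits n :=
  [ffun i : 'I_n => [exists j : 'I_m, ((r - m + j)%N == i) && w j]].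
Definition yword (w : bits m) : bits n :=
  [ffun i : 'I_n => [exists j : 'I_m, ((n - m + j)%N == i) && w j]].

Definition rot_index (i : 'I_n) : 'I_n := Ordinal (ltn_pmod (i + r) n_gt0).
Definition rot (x : bits n) : bits n := [ffun i => x (rot_index i)].

Lemma rot_index_surj (p : 'I_n) : exists i, rot_index i = p.
Proof.
exists (Ordinal (ltn_pmod (p + c) n_gt0)); apply: val_inj => /=.
by rewrite modnDml -addnA [(c + r)%N]addnC modnDr modn_small.
Qed.

Lemma rot_inj : injective rot.
Proof.
move=> x y xy; apply/ffunP => p; have [i <-] := rot_index_surj p.
by move/ffunP: xy => /(_ i); rewrite !ffunE.
Qed.

Lemma bxor_inj (b : bits n) : injective (fun x : bits n => bxor x b).
Proof. exact: (can_inj (g := fun x => bxor x b) (fun x => bxorK x b)). Qed.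

Lemma bxor_eq (u v b : bits n) : (bxor u b == v) = (u == bxor v b).
Proof. by apply/eqP/eqP => [<-|->]; rewrite bxorK. Qed.

Lemma bxorE (x y : bits n) i : bxor x y i = x i (+) y i.
Proof. by rewrite ffunE. Qed.

Lemma rot_bxor_inj : injective (fun x => bxor (rot x) e0).
Proof. by move=> x y /bxor_inj /rot_inj. Qed.

Definition phi0 : {perm bits n} := perm rot_bxor_inj.

Lemma phi0_xword w : phi0 (xword w) = bxor (yword w) e0.
Proof.
rewrite permE; congr bxor; apply/ffunP => i; rewrite !ffunE /=.
apply: eq_existsb => j; congr andb.
have m_le_r := geq_minl r c; have m_le_c := geq_minr r c.
have i_lt := ltn_ord i; have j_lt := ltn_ord j.
case: (ltnP (i + r) n) => i_r.
  by rewrite modn_small //; apply/eqP/eqP => /= h; lia.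
have -> : (i + r = (i + r - n) + n)%N by lia.
by rewrite modnDr modn_small; [apply/eqP/eqP => /= h; lia | lia].
Qed.

Lemma yword_bit0 w : yword w bit0 = false.
Proof.
rewrite ffunE; apply/existsP => -[j /andP [/eqP /= j_eq _]].
by move: j_eq; have := geq_minl r c; lia.
Qed.

Lemma inX1_xword w : @inX1 r c (xword w).
Proof.
apply/forallP => i; apply/implyP => r_le; rewrite ffunE.
apply/existsP => -[j /andP [/eqP /= j_eq _]].
by move: j_eq r_le; have := ltn_ord j; have := geq_minl r c; lia.
Qed.

Lemma inX2_yword w : @inX2 r c (yword w).
Proof.
apply/forallP => i; apply/implyP => i_lt; rewrite ffunE.
apply/existsP => -[j /andP [/eqP /= j_eq _]].
by move: j_eq i_lt; have := ltn_ord j; have := geq_minr r c; lia.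
Qed.

Lemma inX2_bit0 y : @inX2 r c y -> y bit0 = false.
Proof. by move/forallP => /(_ bit0) /implyP /(_ r_gt0) /negbTE. Qed.

(* Bit [r] of a string of X1 is zero and [rot] moves it to bit [0], where [e0] flips
   it: [phi0] has no X-pairs. *)
Lemma phi0_bit0 x : (0 < c)%N -> @inX1 r c x -> phi0 x bit0 = true.
Proof.
move=> c_gt0 /forallP x_X1; rewrite permE bxorE !ffunE eqxx addbT.
have r_index : val (rot_index bit0) = r.
  by rewrite /= add0n modn_small // -{1}[r]addn0 ltn_add2l.
by have := x_X1 (rot_index bit0); rewrite r_index leqnn => /negbTE ->.
Qed.

Lemma yword_inj : injective yword.
Proof.
move=> w w' ww'; apply/ffunP => j.
have j_lt : (n - m + j < n)%N by have := ltn_ord j; have := geq_minl r c; lia.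
have yword_at v : yword v (Ordinal j_lt) = v j.
  rewrite ffunE; apply/existsP/idP => [[j' /andP [/eqP /= jj' vj']]|vj].
    by have -> : j = j' by apply: val_inj; move: jj' => /=; lia.
  by exists j; rewrite eqxx.
by rewrite -yword_at ww' yword_at.
Qed.

Lemma xword_inj : injective xword.
Proof. by move=> w w' /(congr1 phi0); rewrite !phi0_xword => /bxor_inj /yword_inj. Qed.

Variable K : nat.
Local Notation N := (2 ^ m %/ K)%N.

Lemma block_index_lt (z : 'I_N) (k : 'I_K) : (z * K + k < #|bits m|)%N.
Proof.
rewrite card_ffun card_bool card_ord.
have NK_le : (N * K <= 2 ^ m)%N by apply: leq_divM.
have zK_le : (z.+1 * K <= N * K)%N by rewrite leq_mul2r ltn_ord orbT.
by move: zK_le (ltn_ord k); rewrite mulSn; lia.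
Qed.

Definition block_word (z : 'I_N) (k : 'I_K) : bits m := enum_val (Ordinal (block_index_lt z k)).

Lemma block_word_inj z k z' k' : block_word z k = block_word z' k' -> z = z' /\ k = k'.
Proof.
move=> /enum_val_inj /(congr1 val) /= zk_eq.
have K_gt0 : (0 < K)%N := leq_ltn_trans (leq0n k) (ltn_ord k).
have divK y (l : 'I_K) : ((y * K + l) %/ K)%N = y.
  by rewrite divnMDl // (divn_small (ltn_ord l)) addn0.
have modK y (l : 'I_K) : ((y * K + l) %% K)%N = l by rewrite modnMDl modn_small.
split; apply: val_inj => /=.
  by rewrite -(divK z k) -(divK z' k') zk_eq.
by rewrite -(modK z k) -(modK z' k') zk_eq.
Qed.

Definition swapped (z : 'I_N) (u : bits n) : bool :=
  [exists k : 'I_K, (u == yword (block_word z k)) || (u == bxor (yword (block_word z k)) e0)].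

Lemma swapped_bxor z u : swapped z (bxor u e0) = swapped z u.
Proof.
apply: eq_existsb => k; rewrite !bxor_eq bxorK orbC.
by congr orb; apply/eqP/eqP => [/bxor_inj|->].
Qed.

Definition swap_fun z (u : bits n) : bits n := if swapped z u then bxor u e0 else u.

Lemma swap_funK z : involutive (swap_fun z).
Proof. by move=> u; rewrite /swap_fun; case sw: (swapped z u); rewrite ?swapped_bxor sw ?bxorK. Qed.

Definition phi_block z : {perm bits n} := (phi0 * perm (inv_inj (swap_funK z)))%g.

Lemma phi_blockE z x : phi_block z x = swap_fun z (phi0 x).
Proof. by rewrite permM permE. Qed.

Lemma swapped_disj z z' u : swapped z u -> swapped z' u -> z = z'.
Proof.
have bit0_differs w w' : yword w != bxor (yword w') e0.
  by apply/eqP => /(congr1 (fun x : bits n => x bit0)); rewrite bxorE !yword_bit0 ffunE eqxx.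
case/existsP => k /orP [] /eqP -> /existsP [k' /orP [] /eqP].
- by move/yword_inj/block_word_inj => [].
- by move/eqP; rewrite (negbTE (bit0_differs _ _)).
- by move/esym/eqP; rewrite (negbTE (bit0_differs _ _)).
- by move/bxor_inj/yword_inj/block_word_inj => [].
Qed.

Definition query_support (b : bool) z (a : bits n) : bool :=
  if b then swapped z (phi0 a) else swapped z a.

Lemma query_support_disj b z z' a : query_support b z a -> query_support b z' a -> z = z'.
Proof. by case: b; apply: swapped_disj. Qed.

Lemma query_map_phi_block z b a :
  query_map (phi_block z) b a != query_map phi0 b a -> query_support b z a.
Proof.
apply: contraNT; rewrite /query_support /query_map; case: b => not_sw /=.
  by rewrite phi_blockE /swap_fun (negbTE not_sw).
have swap_a : perm (inv_inj (swap_funK z)) a = a by rewrite permE /swap_fun (negbTE not_sw).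
by rewrite /phi_block invMg permM -{1}swap_a permK.
Qed.

Hypothesis c_gt0 : (0 < c)%N.

Lemma Xpairs_phi_block z : [set x | @inX1 r c x && @inX2 r c (phi_block z x)] =
  [set xword (block_word z k) | k in 'I_K].
Proof.
apply/setP => x; rewrite inE; apply/andP/imsetP => [[x_X1]|[k _ ->]].
  rewrite phi_blockE /swap_fun; case: ifP => [/existsP [k /orP [] /eqP phi0x] _|_].
  - by move: (phi0_bit0 c_gt0 x_X1); rewrite phi0x yword_bit0.
  - by exists k => //; apply: (@perm_inj _ phi0); rewrite phi0x phi0_xword.
  - by move/inX2_bit0; rewrite phi0_bit0.
split; first exact: inX1_xword.
have sw : swapped z (phi0 (xword (block_word z k))).
  by apply/existsP; exists k; rewrite phi0_xword eqxx orbT.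
by rewrite phi_blockE /swap_fun sw phi0_xword bxorK inX2_yword.
Qed.

Lemma num_Xpairs_phi_block z : num_Xpairs (phi_block z) = K.
Proof.
rewrite /num_Xpairs Xpairs_phi_block card_imset ?card_ord //.
by move=> k k' /xword_inj /block_word_inj [].
Qed.

Lemma Xpair_phi_block_disj z z' p : Xpair (phi_block z) p -> Xpair (phi_block z') p -> z = z'.
Proof.
have Xpair_block y p' : Xpair (phi_block y) p' -> exists k, p'.1 = xword (block_word y k).
  case/and3P => p1_X1 p2_X2 /eqP phi_p1.
  have : p'.1 \in [set x | @inX1 r c x && @inX2 r c (phi_block y x)].
    by rewrite inE p1_X1 phi_p1 p2_X2.
  by rewrite Xpairs_phi_block => /imsetP [k _ ->]; exists k.
move=> /Xpair_block [k p_k] /Xpair_block [k'].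
by rewrite p_k => /xword_inj /block_word_inj [].
Qed.

End Construction.

Lemma success_probE (R : realType) r c (W : finType) (phi : {perm bits (r + c)})
    (s0 : qspace (r + c) W) (U : nat -> qspace (r + c) W -> qspace (r + c) W -> R[i])
    (dir : nat -> bool) (out : qspace (r + c) W -> bits (r + c) * bits (r + c)) (T : nat) :
  success_prob phi s0 U dir out T =
  (sqnorm (restrict (fun s => Xpair phi (out s)) (qstate phi s0 U dir T)))%:C%C.
Proof.
rewrite /success_prob /sqnorm rmorph_sum big_mkcond /=; apply: eq_bigr => s _.
by rewrite /restrict; case: ifP => _; rewrite ?sqmod0 ?sqmodE.
Qed.

Unset Implicit Arguments.
Set Strict Implicit.

Theorem lemma4 (R : realType) (r c K T : nat) (eps : R[i])
  (W : finType) (s0 : qspace (r + c) W)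
  (U : nat -> qspace (r + c) W -> qspace (r + c) W -> R[i])
  (dir : nat -> bool) (out : qspace (r + c) W -> bits (r + c) * bits (r + c)) :
  (1 <= r)%N -> (1 <= c)%N ->
  (1 <= K)%N -> (K <= 2 ^ minn r c)%N ->
  (forall j, (j <= T)%N -> op_unitary (U j)) ->
  0 < eps ->
  (forall phi : {perm bits (r + c)}, num_Xpairs phi = K ->
     eps <= success_prob phi s0 U dir out T) ->
  eps <= (8 * (T + 1) ^ 2 * K)%:R / (2 ^ minn r c)%:R.
Proof.
move=> r_gt0 c_gt0 K_gt0 K_le U_unitary.
case: eps => a b; rewrite ltcE /= => /andP [/eqP -> a_gt0] success.
have -> : ((8 * (T + 1) ^ 2 * K)%:R / (2 ^ minn r c)%:R : R[i]) =
    ((8 * (T + 1) ^ 2 * K)%:R / (2 ^ minn r c)%:R : R)%:C%C.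
  by rewrite fmorph_div !rmorph_nat.
rewrite -complexr0 lecR; apply: block_count_bound K_gt0 K_le _.
rewrite -[X in X%:R * _](card_ord (2 ^ minn r c %/ K)).
apply: (disjoint_search_bound U_unitary (phi0 := phi0 c r_gt0)
  (phis := @phi_block r c r_gt0 K) (G := fun z s => Xpair (phi_block r_gt0 z) (out s))
  (D := fun z j => query_support r_gt0 (dir j) z)).
- by move=> z j; apply: query_map_phi_block.
- by move=> j; apply: query_support_disj.
- by move=> z z' s; apply: Xpair_phi_block_disj.
- exact: ltW.
move=> z; rewrite -lecR -success_probE.
by apply: success; apply: num_Xpairs_phi_block.
Qed.
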